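(* Fix $p<1$ and assume that for every $p<0$ and $t\in[0,T]$, $(b,\Sigma,F)\in\Theta_t$ implies $b^T\Sigma^{-1}b\le2(1-p)^2/(-p)$. Let $c\in\mathfrak A^c_0$ and $(\pi,\theta),(\hat\pi,\hat\theta)\in\mathfrak A^\pi_0\times\Theta$ with $g^{\theta_t}(\pi_t)\ge g^{\hat\theta_t}(\hat\pi_t)$ for all $t\in[0,T]$. Then $G(\pi,c,\theta)\ge G(\hat\pi,c,\hat\theta)$ (i) if $p\le0$; (ii) if $p\in(0,1)$, provided $0\le c_t\le1$, $g^{\theta_t}(\pi_t)\ge0$ and $g^{\hat\theta_t}(\hat\pi_t)\ge0$ for all $t\in[0,T]$.
   Context: Fix $T>0$, $d\ge1$, $\varepsilon\in(0,2]$. Let $\mathbb{S}^d_+$ be the symmetric positive definite $d\times d$ matrices, $\mathcal L$ the Lévy measures on $\mathbb{R}^d$, with $d^\varepsilon_{\mathcal L}(\mu,\nu)=\sup\int f\,d(\tilde\mu-\tilde\nu)$, $\tilde\mu(A)=\int_A(|z|^{2-\varepsilon}\wedge1)\mu(dz)$, sup over bounded continuous $f$ with $\sup_{z\neq\hat z}[|f(z)|\vee|f(z)-f(\hat z)|/|z-\hat z|^{\varepsilon\wedge1}]\le1$. $\mathcal C\subset\mathbb{R}^d\times\mathbb{S}^d_+\times\mathcal L$ is compact for $d_{\mathcal C}=|y-\hat y|\vee\|M-\hat M\|_2\vee d^\varepsilon_{\mathcal L}(\mu,\hat\mu)$; $\Theta:[0,T]\twoheadrightarrow\mathcal C$ is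 a weakly measurable correspondence with closed convex values, and $\Theta$ also denotes the set of Borel $\theta:[0,T]\to\mathcal C$ with $\theta_t\in\Theta_t$. Assume $\mathbf S_t=\bigcup_{(y,M,\mu)\in\Theta_t}\mathrm{supp}(\mu)$ is closed, there is $\kappa_t>0$ with $\{|z|\le\kappa_t^{-1}\}\subseteq\mathrm{Conv}(\mathbf S_t\cup\{0\})\subseteq\{|z|\le\kappa_t\}$, and $|y|\vee\|M\|_2\vee d^\varepsilon_{\mathcal L}(\mu,0)\le\kappa_t$ on $\Theta_t$. Let $U(x)=\log x$ if $p=0$, $x^p/p$ otherwise. $\mathcal O_t=\{x:x^Tz>-1\ \forall z\in\mathbf S_t\}$; $\mathfrak A^\pi_0$ = Borel $\pi:[0,T]\to\mathbb{R}^d$ with $\pi_t\in\mathcal O_t$; $\mathfrak A^c_0$ = Borel $c:[0,T]\to[0,\infty)$. Local kernel: $g^{(y,M,\mu)}(x)=x^Ty-\frac{1-p}2x^TMx+\int(U(1+x^Tz)-U(1)-x^Tz)\mu(dz)$ for $x\in\mathcal O_t,(y,M,\mu)\in\Theta_t$. Global kernel $G(\pi,c,\theta)=\int_0^T\big(\int_0^t(g^{\theta_s}(\pi_s)-c_s)ds+g^{\theta_t}(\pi_t)-c_t+U(c_t)\big)dt$ if $p=0$; $G(\pi,c,\theta)=\int_0^T\exp\big(\int_0^tp(g^{\theta_s}(\pi_s)-c_s)ds\big)\big(g^{\theta_t}(\pi_t)-c_t+U(c_t)\big)dt$ if $p\ne0$. *)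

From HB Require Import structures.
From mathcomp Require Import all_boot all_order all_algebra.
From mathcomp Require Import all_classical all_reals all_analysis.
Set Implicit Arguments. Unset Strict Implicit. Unset Printing Implicit Defensive.
Import Order.TTheory GRing.Theory Num.Theory.
Import numFieldNormedType.Exports.
Local Open Scope classical_set_scope.
Local Open Scope ring_scope.

Section Defs.
Context {R : realType}.

Definition Rd (d : nat) := g_sigma_algebraType (@open 'rV[R]_d).

Definition dot {d : nat} (x z : 'rV[R]_d) : R := \sum_(i < d) x ord0 i * z ord0 i.
Definition eucl {d : nat} (x : 'rV[R]_d) : R := Num.sqrt (dot x x).

Definition SPD {d : nat} (M : 'M[R]_d) : Prop :=
  M^T = M /\ forall x : 'rV[R]_d, x != 0 -> 0 < dot (x *m M) x.

Definition opnorm {d : nat} (M : 'M[R]_d) : R :=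
  sup [set eucl (x *m M) | x in [set x : 'rV[R]_d | eucl x <= 1]].

Definition triple (d : nat) :=
  ('rV[R]_d * 'M[R]_d * {measure set (Rd d) -> \bar R})%type.

Definition levy {d : nat} (mu : {measure set (Rd d) -> \bar R}) : Prop :=
  mu [set (0 : 'rV[R]_d)] = 0%E /\
  (\int[mu]_z (Num.min (eucl (z : 'rV[R]_d) ^+ 2) 1)%:E < +oo)%E.

(* weight |z|^{2-eps} /\ 1 defining mu~ *)
Definition weight {d : nat} (eps : R) (z : 'rV[R]_d) : R :=
  Num.min (eucl z `^ (2 - eps)) 1.

Definition testfun {d : nat} (eps : R) (f : 'rV[R]_d -> R) : Prop :=
  continuous f /\ (exists M : R, forall z, `|f z| <= M) /\
  forall z zh : 'rV[R]_d, z != zh ->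
    Num.max `|f z| (`|f z - f zh| / (eucl (z - zh) `^ Num.min eps 1)) <= 1.

Definition intw {d : nat} (eps : R) (mu : {measure set (Rd d) -> \bar R})
  (f : 'rV[R]_d -> R) : \bar R :=
  \int[mu]_z ((f z * weight eps z)%:E).

Definition dL {d : nat} (eps : R) (mu nu : {measure set (Rd d) -> \bar R}) : \bar R :=
  ereal_sup [set (intw eps mu f - intw eps nu f)%E | f in [set f | testfun eps f]].

Definition dC {d : nat} (eps : R) (a b : triple d) : \bar R :=
  maxe (maxe (eucl (a.1.1 - b.1.1))%:E (opnorm (a.1.2 - b.1.2))%:E)
       (dL eps a.2 b.2).

Definition inYML {d : nat} (a : triple d) : Prop := SPD a.1.2 /\ levy a.2.

Definition relopen {d : nat} (eps : R) (C U : set (triple d)) : Prop :=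
  U `<=` C /\ forall a, U a -> exists2 r : R, 0 < r &
    [set b | C b /\ (dC eps a b < r%:E)%E] `<=` U.
Definition relclosed {d : nat} (eps : R) (C A : set (triple d)) : Prop :=
  A `<=` C /\ relopen eps C (C `\` A).
Definition relcompact {d : nat} (eps : R) (C : set (triple d)) : Prop :=
  forall (I : Type) (U : I -> set (triple d)),
    (forall i, relopen eps C (U i)) -> C `<=` \bigcup_i U i ->
    exists F : set I, finite_set F /\ C `<=` \bigcup_(i in F) U i.

Definition convex_triples {d : nat} (A : set (triple d)) : Prop :=
  forall a b : triple d, A a -> A b -> forall l : R, 0 <= l <= 1 ->
    exists nu : {measure set (Rd d) -> \bar R},
      (forall B : set (Rd d), measurable B ->
         nu B = (l%:E * a.2 B + (1 - l)%:E * b.2 B)%E) /\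
      A (l *: a.1.1 + (1 - l) *: b.1.1, l *: a.1.2 + (1 - l) *: b.1.2, nu).

Definition supp {d : nat} (mu : {measure set (Rd d) -> \bar R}) : set 'rV[R]_d :=
  [set z | forall U : set 'rV[R]_d, open U -> U z -> (0 < mu U)%E].

Definition conv {d : nat} (A : set 'rV[R]_d) : set 'rV[R]_d :=
  [set x | exists n (a : 'I_n -> 'rV[R]_d) (l : 'I_n -> R),
     (forall i, A (a i)) /\ (forall i, 0 <= l i) /\ \sum_(i < n) l i = 1 /\
     x = \sum_(i < n) l i *: a i].

Definition Sset {d : nat} (Theta : R -> set (triple d)) (t : R) : set 'rV[R]_d :=
  [set z | exists a, Theta t a /\ supp a.2 z].

Definition Oset {d : nat} (Theta : R -> set (triple d)) (t : R) : set 'rV[R]_d :=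
  [set x | forall z, Sset Theta t z -> -1 < dot x z].

Definition standing (T : R) (d : nat) (eps : R) (C : set (triple d))
    (Theta : R -> set (triple d)) : Prop :=
  0 < T /\ (0 < d)%N /\ 0 < eps <= 2 /\
  C `<=` inYML /\ relcompact eps C /\
  (forall t, `[0, T]%classic t ->
     Theta t `<=` C /\ relclosed eps C (Theta t) /\ convex_triples (Theta t)) /\
  (forall U, relopen eps C U ->
     measurable [set t : R | `[0, T]%classic t /\ Theta t `&` U !=set0]) /\
  (forall t, `[0, T]%classic t ->
     closed (Sset Theta t) /\
     exists2 k : R, 0 < k &
       [set z | eucl z <= k^-1] `<=` conv (Sset Theta t `|` [set 0]) /\
       conv (Sset Theta t `|` [set 0]) `<=` [set z | eucl z <= k] /\
       forall a, Theta t a ->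
         (maxe (maxe (eucl a.1.1)%:E (opnorm a.1.2)%:E)
               (dL eps a.2 mzero) <= k%:E)%E).

Definition thetaAdm (T : R) {d : nat} (eps : R) (C : set (triple d))
    (Theta : R -> set (triple d)) (theta : R -> triple d) : Prop :=
  (forall U, relopen eps C U -> measurable (`[0, T]%classic `&` theta @^-1` U)) /\
  (forall t, `[0, T]%classic t -> Theta t (theta t)).

Definition piAdm (T : R) {d : nat} (Theta : R -> set (triple d))
    (pi : R -> Rd d) : Prop :=
  measurable_fun `[0, T] pi /\ (forall t, `[0, T]%classic t -> Oset Theta t (pi t)).

Definition cAdm (T : R) (c : R -> R) : Prop :=
  measurable_fun `[0, T] c /\ (forall t, `[0, T]%classic t -> 0 <= c t).

Definition Ufun (p x : R) : R := if p == 0 then ln x else x `^ p / p.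
Definition UE (p x : R) : \bar R :=
  if 0 < x then (Ufun p x)%:E else if 0 < p then 0%E else -oo%E.

Definition gk (p : R) {d : nat} (a : triple d) (x : 'rV[R]_d) : \bar R :=
  ((dot x a.1.1 - (1 - p) / 2 * dot (x *m a.1.2) x)%:E +
   \int[a.2]_z ((Ufun p (1 + dot x z) - Ufun p 1 - dot x z)%:E))%E.

Definition Gk (p T : R) {d : nat} (pi : R -> Rd d) (c : R -> R)
    (theta : R -> triple d) : \bar R :=
  let gg := fun t => gk p (theta t) (pi t) in
  if p == 0 then
    (\int[lebesgue_measure]_(t in `[0%R, T])
       ((\int[lebesgue_measure]_(s in `[0%R, t]) (gg s - (c s)%:E))
        + gg t - (c t)%:E + UE p (c t)))%E
  else
    (\int[lebesgue_measure]_(t in `[0%R, T])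
       (expeR (\int[lebesgue_measure]_(s in `[0%R, t]) (p%:E * (gg s - (c s)%:E)))
        * (gg t - (c t)%:E + UE p (c t))))%E.

End Defs.

From HB Require Import structures.
From mathcomp Require Import all_boot all_order all_algebra.
From mathcomp Require Import all_classical all_reals all_analysis.
From mathcomp Require Import ring lra.
Import Order.TTheory GRing.Theory Num.Theory.
Import numFieldNormedType.Exports.
Local Open Scope classical_set_scope.
Local Open Scope ring_scope.

(* For p = 0 the global kernel integrates int_0^t (g - c) + g_t - c_t + U(c_t),
   plainly increasing in g.  For p <> 0 it integrates
   exp (p int_0^t (g - c)) * (g_t - c_t + U(c_t)).  If p is in (0,1) and
   0 <= c <= 1, both factors are nonnegative (c <= c^p <= c^p/p) and increase
   with g.  If p < 0 the exponential decreases with g, so the second factor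
   must be nonpositive: c - U(c) is minimal at c = 1, with value (1-p)/(-p), and
   g <= (1-p)/(-p) because completing the square gives
   x.b - (1-p)/2 x'Sx <= b'S^-1b / (2(1-p)), while the jump integrand
   ((1+x.z)^p - 1)/p - x.z is nonpositive by Bernoulli's inequality on
   {x.z > -1}, whose complement is closed and misses supp mu, hence is null. *)

Section integral_pointwise.
Local Open Scope ereal_scope.
Context d (T : measurableType d) (R : realType) (mu : {measure set T -> \bar R}).

Lemma ge0_le_integral_pointwise (D : set T) (f g : T -> \bar R) :
  (forall x, D x -> 0 <= f x) -> (forall x, D x -> f x <= g x) ->
  \int[mu]_(x in D) f x <= \int[mu]_(x in D) g x.
Proof.
move=> f0 fg; rewrite !ge0_integralE//; last first.
  by move=> x Dx; rewrite (le_trans (f0 x Dx))// fg.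
apply: ereal_sup_le => _ [h hf <-]; exists h => //= x.
apply: le_trans (hf x) _; rewrite /patch; case: ifP => // /[1!inE]; exact: fg.
Qed.

Lemma le_integral_pointwise (D : set T) (f g : T -> \bar R) :
  (forall x, D x -> f x <= g x) ->
  \int[mu]_(x in D) f x <= \int[mu]_(x in D) g x.
Proof.
move=> fg; have {}fg : {in D, forall x, f x <= g x} by move=> x /[1!inE]/fg.
rewrite [leLHS]integralE [leRHS]integralE; apply: leeB.
- apply: ge0_le_integral_pointwise => [x _|x Dx]; first exact: funepos_ge0.
  by apply: (funepos_le fg); rewrite inE.
- apply: ge0_le_integral_pointwise => [x _|x Dx]; first exact: funeneg_ge0.
  by apply: (funeneg_le fg); rewrite inE.
Qed.

Lemma integral_le0_outside_negligible (N : set T) (f : T -> \bar R) :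
  mu.-negligible N -> (forall x, ~ N x -> f x <= 0) -> \int[mu]_x f x <= 0.
Proof.
move=> [M [mM M0 NM]] f0.
apply: (@le_trans _ _ (\int[mu]_x ((cst +oo) \_ M) x)).
  apply: le_integral_pointwise => x _; rewrite /patch.
  case: ifPn => [_|]; first exact: leey.
  by rewrite notin_setE => nMx; apply: f0 => /NM.
by rewrite -integral_mkcond integral_cst// M0 mule0.
Qed.

End integral_pointwise.

Section support.
Context {R : realType} {d : nat} (mu : {measure set (@Rd R d) -> \bar R}).

Lemma compact_locally_null_negligible (A : set 'rV[R]_d) : compact A ->
  (forall z, A z -> exists2 U, open U & U z /\ mu U = 0%E) ->
  mu.-negligible (A : set (@Rd R d)).
Proof.
rewrite compact_cover => cA nullA.
have [|z /nullA[U oU [Uz U0]]|D' D'null AD'] :=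
  cA _ [set U : set 'rV[R]_d | open U /\ mu U = 0%E] id; first by move=> U [].
  by exists U.
apply: (@negligibleS _ _ _ mu _ A AD'); rewrite /cover bigcup_fset big_seq.
elim/big_ind : _.
- exact: negligible_set0.
- exact: (@negligibleU _ _ _ mu).
- move=> U /D'null; rewrite inE => -[oU U0].
  by exists U; split => //; exact: sub_sigma_algebra.
Qed.

Lemma closed_supp_disjoint_negligible (K : set 'rV[R]_d) :
  closed K -> (forall z, K z -> ~ supp mu z) -> mu.-negligible (K : set (@Rd R d)).
Proof.
move=> cK Ksupp.
pose box (n : nat) := [set v : 'rV[R]_d | forall i, `[- n%:R, n%:R]%classic (v ord0 i)].
have -> : K = \bigcup_n (box n `&` K).
  rewrite eqEsubset; split => [z Kz|z [n _ []]//].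
  exists (Num.truncn (\sum_i `|z ord0 i|)).+1 => //; split => // i.
  rewrite /= in_itv /= -ler_norml; apply: le_trans (ltW (truncnS_gt _)).
  by rewrite (bigD1 i) //= lerDl sumr_ge0.
apply: negligible_bigcup => n; apply: compact_locally_null_negligible.
  apply: compact_closedI cK.
  have := @rV_compact R d (fun=> `[- n%:R, n%:R]%classic); apply => i.
  exact: segment_compact.
move=> z [_ /Ksupp] /existsNP[U /not_implyP[oU /not_implyP[Uz /negP]]].
by rewrite lt0e measure_ge0 andbT negbK => /eqP U0; exists U.
Qed.

End support.

Section dot.
Context {R : realType} {d : nat}.
Implicit Types (x y z : 'rV[R]_d) (S : 'M[R]_d).

Lemma dotE x z : dot x z = (x *m z^T) ord0 ord0.
Proof. by rewrite /dot mxE; apply: eq_bigr => i _; rewrite mxE. Qed.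

Lemma dotC x z : dot x z = dot z x.
Proof. by rewrite /dot; apply: eq_bigr => i _; rewrite mulrC. Qed.

Lemma dot0l z : dot 0 z = 0.
Proof. by rewrite dotE mul0mx mxE. Qed.

Lemma dotBl x y z : dot (x - y) z = dot x z - dot y z.
Proof. by rewrite !dotE mulmxBl !mxE. Qed.

Lemma dotBr x y z : dot z (x - y) = dot z x - dot z y.
Proof. by rewrite dotC dotBl !(dotC z). Qed.

Lemma dotZl a x z : dot (a *: x) z = a * dot x z.
Proof. by rewrite !dotE -scalemxAl !mxE. Qed.

Lemma dotZr a x z : dot z (a *: x) = a * dot z x.
Proof. by rewrite dotC dotZl dotC. Qed.

Lemma dot_mulmxl x y S : dot (x *m S) y = dot x (y *m S^T).
Proof. by rewrite !dotE trmx_mul trmxK mulmxA. Qed.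

Lemma SPD_unitmx {S} : SPD S -> S \in unitmx.
Proof.
move=> [_ Spos]; rewrite unitmxE unitfE; apply/negP => /det0P[v v0 vS].
by have := Spos v v0; rewrite vS dot0l ltxx.
Qed.

Lemma SPD_ge0 {S} : SPD S -> forall x, 0 <= dot (x *m S) x.
Proof.
move=> [_ Spos] x; have [->|x0] := eqVneq x 0; first by rewrite mul0mx dot0l.
exact/ltW/Spos.
Qed.

(* Complete the square around [u = (2 Q)^-1 b S^-1]. *)
Lemma dot_sub_quad_le S b x (Q : R) : SPD S -> 0 < Q ->
  dot x b - Q * dot (x *m S) x <= dot (b *m invmx S) b / (4 * Q).
Proof.
move=> SPDS Q0; have [St _] := SPDS.
set k := (2 * Q)^-1; set u := k *: (b *m invmx S).
have uS : u *m S = k *: b.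
  by rewrite /u -scalemxAl -mulmxA mulVmx ?SPD_unitmx// mulmx1.
have := SPD_ge0 SPDS (x - u).
rewrite mulmxBl dotBl !dotBr [dot (x *m S) u]dot_mulmxl St uS !dotZl !dotZr.
rewrite [dot x b]dotC [dot b (b *m invmx S)]dotC.
have Qk : Q * k = 2^-1 by rewrite /k invfM mulrCA mulfV ?gt_eqF// mulr1.
set A := dot (x *m S) x; set B := dot b x; set C := dot (b *m invmx S) b.
have -> : C / (4 * Q) = Q * (k * (k * C)) by rewrite /k; field; lra.
move=> sq_ge0; have : 0 <= Q * (A - k * B - (k * B - k * (k * C))).
  by rewrite mulr_ge0 // ltW.
have -> : Q * (A - k * B - (k * B - k * (k * C))) =
          Q * A - 2 * (Q * k) * B + Q * (k * (k * C)) by ring.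
rewrite Qk; lra.
Qed.

Lemma dot_continuous x : continuous (dot x).
Proof.
apply: continuous_big => [|i _]; first exact: add_continuous.
move=> z; apply: (@continuousM _ _ (fun=> x ord0 i) (fun z : 'rV[R]_d => z ord0 i)).
  exact: cst_continuous.
exact: coord_continuous.
Qed.

End dot.

Section utility.
Context {R : realType}.
Implicit Types (p c y : R).

Lemma powR_ge_tangent1 {p y} : p <= 0 -> 0 < y -> 1 + p * (y - 1) <= y `^ p.
Proof.
move=> p0 y0; rewrite /powR gt_eqF//; apply: le_trans (expR_ge1Dx _).
rewrite lerD2l ler_wnM2l//.
have := @le_ln1Dx R (y - 1); rewrite addrCA subrr addr0; apply; lra.
Qed.

Lemma Ufun_jump_le0 p y : p < 0 -> -1 < y -> Ufun p (1 + y) - Ufun p 1 - y <= 0.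
Proof.
move=> p0 y1; rewrite /Ufun lt_eqF// powR1.
have y1_gt0 : 0 < 1 + y by lra.
have := powR_ge_tangent1 (ltW p0) y1_gt0; rewrite addrAC subrr add0r => tangent.
have : (1 + y) `^ p / p <= (1 + p * y) / p by rewrite ler_wnM2r// invr_le0 ltW.
have -> : (1 + p * y) / p = 1 / p + y by field; rewrite lt_eqF.
lra.
Qed.

Lemma sub_addUE_le0 p c (g : \bar R) : p < 0 -> 0 <= c ->
  (g <= ((1 - p) / - p)%:E)%E -> (g - c%:E + UE p c <= 0)%E.
Proof.
move=> p0 c0 gle; rewrite /UE; have [c_gt0|] := ltP 0 c; last first.
  by rewrite ltNge (ltW p0) /= addeNy leNye.
rewrite /Ufun lt_eqF//; apply: le_trans (leeD (leeB gle (lexx _)) (lexx _)) _.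
rewrite -EFinB -EFinD lee_fin.
have : c `^ p / p <= (1 + p * (c - 1)) / p.
  by apply: ler_wnM2r; [rewrite invr_le0 ltW | exact: powR_ge_tangent1 (ltW p0) c_gt0].
have -> : (1 + p * (c - 1)) / p = p^-1 + c - 1 by field; rewrite lt_eqF.
have -> : (1 - p) / - p = 1 - p^-1 by field; rewrite lt_eqF.
lra.
Qed.

Lemma sub_addUE_ge0 p c (g : \bar R) : 0 < p -> p < 1 -> 0 <= c <= 1 ->
  (0 <= g)%E -> (0 <= g - c%:E + UE p c)%E.
Proof.
move=> p0 p1 /andP[c0 c1] g0; rewrite /UE; have [c_gt0|] := ltP 0 c; last first.
  by move=> c_le0; rewrite p0 (_ : c = 0) ?sube0 ?adde0//; apply/eqP; rewrite eq_le c_le0.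
rewrite /Ufun gt_eqF// -addeA -EFinN -EFinD adde_ge0// lee_fin addrC subr_ge0.
have c_le_powR : c <= c `^ p.
  rewrite /powR gt_eqF// -{1}(lnK c_gt0) ler_expR -{1}(mul1r (ln c)).
  by rewrite ler_wnM2r ?ln_le0// ltW.
apply: le_trans c_le_powR _; rewrite ler_pdivlMr//.
by have := powR_gt0 p c_gt0; nra.
Qed.

End utility.

Section kernel_bound.
Context {R : realType} {d : nat}.

Lemma jump_integral_le0 (p : R) (mu : {measure set (@Rd R d) -> \bar R}) x :
  p < 0 -> (forall z, supp mu z -> -1 < dot x z) ->
  (\int[mu]_z ((Ufun p (1 + dot x z) - Ufun p 1 - dot x z)%:E) <= 0)%E.
Proof.
move=> p0 xsupp.
(* Off the null set the integrand involves [Ufun p] of a nonpositive number,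
   a junk value about which nothing is known. *)
apply: (@integral_le0_outside_negligible _ _ _ mu [set z | dot x z <= -1]).
  apply: closed_supp_disjoint_negligible.
    exact: (continuous_closedP _).1 (dot_continuous x) _ (@closed_le R (-1)).
  by move=> z /= zle /xsupp; rewrite ltNge zle.
by move=> z /negP; rewrite -ltNge => ?; rewrite lee_fin Ufun_jump_le0.
Qed.

Lemma gk_le (p : R) (a : @triple R d) x : p < 0 -> SPD a.1.2 ->
  dot (a.1.1 *m invmx a.1.2) a.1.1 <= 2 * (1 - p) ^+ 2 / - p ->
  (forall z, supp a.2 z -> -1 < dot x z) ->
  (gk p a x <= ((1 - p) / - p)%:E)%E.
Proof.
move=> p0 SPDa ba xsupp; rewrite /gk.
apply: le_trans (leeD (lexx _) (jump_integral_le0 _ _ _ p0 xsupp)) _.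
have Q0 : 0 < (1 - p) / 2 by lra.
rewrite adde0 lee_fin; apply: le_trans (dot_sub_quad_le _ _ x _ SPDa Q0) _.
rewrite ler_pdivrMr; last lra.
have -> : (1 - p) / - p * (4 * ((1 - p) / 2)) = 2 * (1 - p) ^+ 2 / - p.
  by field; rewrite lt_eqF.
exact: ba.
Qed.

End kernel_bound.

Lemma standing_SPD {R : realType} (T : R) d eps (C : set (@triple R d)) Theta t a :
  standing T eps C Theta -> `[0, T]%classic t -> Theta t a -> SPD a.1.2.
Proof. by move=> [_ [_ [_ [CY [_ [ThetaC _]]]]]] tI /(ThetaC t tI).1 /CY[]. Qed.

Section Gk_monotone.
Local Open Scope ereal_scope.
Context {R : realType} {d : nat} (p T : R) (c : R -> R).
Context (pi pih : R -> @Rd R d) (theta thetah : R -> @triple R d).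
Hypothesis le_gk : forall t, `[0%R, T]%classic t ->
  gk p (thetah t) (pih t) <= gk p (theta t) (pi t).

Let le_gk_sub t s : `[0%R, T]%classic t -> `[0%R, t]%classic s ->
  gk p (thetah s) (pih s) - (c s)%:E <= gk p (theta s) (pi s) - (c s)%:E.
Proof.
move=> tI sI; apply: leeB => //; apply: le_gk; move: tI sI.
by rewrite /= !in_itv /= => /andP[_ tT] /andP[-> st]; rewrite (le_trans st tT).
Qed.

Let le_reward t : `[0%R, T]%classic t ->
  gk p (thetah t) (pih t) - (c t)%:E + UE p (c t) <=
  gk p (theta t) (pi t) - (c t)%:E + UE p (c t).
Proof. by move=> tI; apply: leeD => //; apply: leeB => //; exact: le_gk. Qed.

Lemma le_Gk_log : p = 0%R -> Gk p T pih c thetah <= Gk p T pi c theta.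
Proof.
move=> /eqP p0; rewrite /Gk p0; apply: le_integral_pointwise => t tI.
apply: leeD => //; apply: leeB => //; apply: leeD; last exact: le_gk.
by apply: le_integral_pointwise => s; exact: le_gk_sub.
Qed.

Lemma le_Gk_neg : (p < 0)%R ->
  (forall t, `[0%R, T]%classic t ->
     gk p (theta t) (pi t) - (c t)%:E + UE p (c t) <= 0) ->
  Gk p T pih c thetah <= Gk p T pi c theta.
Proof.
move=> p0 reward_le0; rewrite /Gk lt_eqF//; apply: le_integral_pointwise => t tI.
rewrite -[leRHS]oppeK -[leLHS]oppeK leeN2 -!muleN; apply: lee_pmul.
- exact: expeR_ge0.
- by rewrite oppe_ge0 reward_le0.
- rewrite lee_expeR; apply: le_integral_pointwise => s sI.
  have -> : p%:E = - (- p)%:E by rewrite EFinN oppeK.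
  rewrite !mulNe leeN2; apply: lee_wpmul2l; first by rewrite lee_fin oppr_ge0 ltW.
  exact: le_gk_sub tI sI.
- by rewrite leeN2; exact: le_reward.
Qed.

Lemma le_Gk_pos : (0 < p)%R ->
  (forall t, `[0%R, T]%classic t ->
     0 <= gk p (thetah t) (pih t) - (c t)%:E + UE p (c t)) ->
  Gk p T pih c thetah <= Gk p T pi c theta.
Proof.
move=> p0 reward_ge0; rewrite /Gk gt_eqF//; apply: le_integral_pointwise => t tI.
apply: lee_pmul; [exact: expeR_ge0 | exact: reward_ge0 | | exact: le_reward].
rewrite lee_expeR; apply: le_integral_pointwise => s sI.
by apply: lee_wpmul2l; [rewrite lee_fin ltW | exact: le_gk_sub tI sI].
Qed.

End Gk_monotone.

Theorem theorem5p1 (R : realType) (T : R) (d : nat) (eps : R)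
  (C : set (@triple R d)) (Theta : R -> set (@triple R d)) (p : R) :
  standing T eps C Theta ->
  p < 1 ->
  (p < 0 -> forall t, `[0, T]%classic t ->
     forall (b : 'rV[R]_d) (Sigma : 'M[R]_d) (F : {measure set (@Rd R d) -> \bar R}),
       Theta t (b, Sigma, F) ->
       dot (b *m invmx Sigma) b <= 2 * (1 - p) ^+ 2 / (- p)) ->
  forall (c : R -> R) (pi pih : R -> @Rd R d) (theta thetah : R -> @triple R d),
    cAdm T c ->
    piAdm T Theta pi -> thetaAdm T eps C Theta theta ->
    piAdm T Theta pih -> thetaAdm T eps C Theta thetah ->
    (forall t, `[0, T]%classic t ->
       (gk p (thetah t) (pih t) <= gk p (theta t) (pi t))%E) ->
    (p <= 0 -> (Gk p T pih c thetah <= Gk p T pi c theta)%E) /\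
    (0 < p ->
       (forall t, `[0, T]%classic t ->
          0 <= c t <= 1 /\ (0 <= gk p (theta t) (pi t))%E /\
          (0 <= gk p (thetah t) (pih t))%E) ->
       (Gk p T pih c thetah <= Gk p T pi c theta)%E).
Proof.
move=> standingT p1 b_bound c pi pih theta thetah [_ c_ge0] [_ piO] [_ thetaT] _ _
  le_gk.
split => [p_le0|p_gt0 pos_hyp]; last first.
  apply: le_Gk_pos => // t tI; have [c01 [_ gh_ge0]] := pos_hyp t tI.
  exact: sub_addUE_ge0.
have [p0|p_neq0] := eqVneq p 0; first exact: le_Gk_log.
have p_lt0 : p < 0 by rewrite lt_neqAle p_neq0 p_le0.
apply: le_Gk_neg => // t tI; apply: sub_addUE_le0 => //; first exact: c_ge0.
apply: gk_le => //; first exact: standing_SPD standingT tI (thetaT t tI).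
  have := b_bound p_lt0 t tI (theta t).1.1 (theta t).1.2 (theta t).2.
  by rewrite -!surjective_pairing; apply; exact: thetaT.
by move=> z zs; apply: (piO t tI); exists (theta t); split => //; exact: thetaT.
Qed.
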